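(* Assume $D_1=D_2=D$ and, for $\mu>\mu_{c_1}(D,D)$, define $$A(\mu)=Z(\mu)\Bigl(\frac{D}{\gamma_2\lambda_Z}-f_2'(\lambda_Z)\Bigr)-\lambda_Zf_1'(N(\mu)),$$ where $N(\mu)=N(\mu,D,D)$, $Z(\mu)=Z(\mu,D,D)$, $\lambda_Z=\lambda_Z(D)$. The characteristic polynomial of the Jacobian $J(E_2(\mu))$ of $( * )$ at $E_2(\mu)$ is $(-D-x)\bigl(x^2-A(\mu)x-B(\mu)C(\mu)\bigr)$ with $B(\mu)=-(\lambda_Zf_1'(N(\mu))+D)/\gamma_2$ and $C(\mu)=\gamma_2Z(\mu)f_2'(\lambda_Z)$. (1) If $\frac{D}{\gamma_2\lambda_Z}>f_2'(\lambda_Z)$, then there exists $\mu_{c_2}>\mu_{c_1}(D,D)$ with $A(\mu_{c_2})=0$; at $\mu=\mu_{c_2}$, $J(E_2(\mu_{c_2}))$ has the eigenvalue $-D$ and a pair of nonzero purely imaginary complex conjugate eigenvalues, and for all $\mu$ in a neighborhood of $\mu_{c_2}$, $J(E_2(\mu))$ has the eigenvalue $-D$ and a pair of nonreal complex conjugate eigenvalues with real part $A(\mu)/2$. (2) If in addition $f_1$ is twice differentiable and $f_1''(N(\mu_{c_2}))<0$, then $A'(\mu_{c_2})>0$ (derivative in $\mu$), so the real part of the complex pair crosses zero with positive speed at $\mu_{c_2}$. (3) If in addition $f_1''(N)<0$ for all $N\ge0$, then $\mu_{c_2}$ is the unique zero of $A$ on $(\mu_{c_1}(D,D),\infty)$.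
   Context: Standing setup. Let $D>0$, $\gamma_1>0$, $\gamma_2>0$ be constants and $\mu>0$ a parameter. Let $f_1,f_2:[0,\infty)\to[0,\infty)$ be continuously differentiable and bounded, with $f_i(0)=0$, $f_i'(x)>0$ for all $x\ge 0$, $\lim_{N\to\infty}f_1(N)>D/\gamma_1$ and $\lim_{P\to\infty}f_2(P)>D/\gamma_2$. Here $D_1=D_2=D$, so the system $( * )$ is $$\frac{dN}{dt}=(\mu-N)D-Pf_1(N),\quad \frac{dP}{dt}=\gamma_1Pf_1(N)-DP-Zf_2(P),\quad \frac{dZ}{dt}=\gamma_2Zf_2(P)-DZ.$$ $\lambda_P(D)$ is the unique number with $f_1(\lambda_P(D))=D/\gamma_1$, $\lambda_Z(D)$ the unique number with $f_2(\lambda_Z(D))=D/\gamma_2$, and $\mu_{c_1}(D,D)=\lambda_P(D)+\lambda_Z(D)/\gamma_1$. For $\mu>\mu_{c_1}(D,D)$, $N(\mu,D,D)$ is the unique solution $N\in(0,\mu)$ of $(\mu-N)D-\lambda_Z(D)f_1(N)=0$, $Z(\mu,D,D)=(\gamma_2/D)\lambda_Z(D)\bigl(\gamma_1f_1(N(\mu,D,D))-D\bigr)>0$, and $E_2(\mu)=(N(\mu,D,D),\lambda_Z(D),Z(\mu,D,D))$ is the coexistence equilibrium. *)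

From Stdlib Require Import Reals Lra.
Open Scope R_scope.

Definition Cx : Type := (R * R)%type.
Definition RtoC (a : R) : Cx := (a, 0).
Definition Cadd (z w : Cx) : Cx := (fst z + fst w, snd z + snd w).
Definition Copp (z : Cx) : Cx := (- fst z, - snd z).
Definition Csub (z w : Cx) : Cx := Cadd z (Copp w).
Definition Cmul (z w : Cx) : Cx :=
  (fst z * fst w - snd z * snd w, fst z * snd w + snd z * fst w).

Definition det3C (M : nat -> nat -> Cx) : Cx :=
  Csub
   (Cadd (Cadd (Cmul (M 0%nat 0%nat) (Cmul (M 1%nat 1%nat) (M 2%nat 2%nat)))
               (Cmul (M 0%nat 1%nat) (Cmul (M 1%nat 2%nat) (M 2%nat 0%nat))))
         (Cmul (M 0%nat 2%nat) (Cmul (M 1%nat 0%nat) (M 2%nat 1%nat))))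
   (Cadd (Cadd (Cmul (M 0%nat 2%nat) (Cmul (M 1%nat 1%nat) (M 2%nat 0%nat)))
               (Cmul (M 0%nat 1%nat) (Cmul (M 1%nat 0%nat) (M 2%nat 2%nat))))
         (Cmul (M 0%nat 0%nat) (Cmul (M 1%nat 2%nat) (M 2%nat 1%nat)))).

Definition charpoly3 (J : nat -> nat -> R) (z : Cx) : Cx :=
  det3C (fun i j => Csub (RtoC (J i j)) (if Nat.eqb i j then z else RtoC 0)).

Definition is_eigenvalue (J : nat -> nat -> R) (z : Cx) : Prop :=
  charpoly3 J z = RtoC 0.

Definition deriv_on_nonneg (f f' : R -> R) : Prop :=
  forall x, 0 <= x -> forall eps, 0 < eps -> exists delta, 0 < delta /\
    forall y, 0 <= y -> y <> x -> Rabs (y - x) < delta ->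
      Rabs ((f y - f x) / (y - x) - f' x) < eps.

Definition continuous_on_nonneg (g : R -> R) : Prop :=
  forall x, 0 <= x -> forall eps, 0 < eps -> exists delta, 0 < delta /\
    forall y, 0 <= y -> Rabs (y - x) < delta -> Rabs (g y - g x) < eps.

Definition limit_at_infty (f : R -> R) (L : R) : Prop :=
  forall eps, 0 < eps -> exists M, forall x, M <= x -> Rabs (f x - L) < eps.

(* Standing hypotheses on a response function f : [0,oo) -> [0,oo)
   with derivative f', and c the threshold (D/gamma_i) for its limit. *)
Definition response_fun (f f' : R -> R) (c : R) : Prop :=
  (forall x, 0 <= x -> 0 <= f x) /\
  deriv_on_nonneg f f' /\ continuous_on_nonneg f' /\
  (exists M, forall x, 0 <= x -> f x <= M) /\
  f 0 = 0 /\
  (forall x, 0 <= x -> 0 < f' x) /\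
  (exists L, limit_at_infty f L /\ c < L).

Definition field (D g1 g2 mu : R) (f1 f2 : R -> R) (i : nat) (N P Z : R) : R :=
  match i with
  | 0%nat => (mu - N) * D - P * f1 N
  | 1%nat => g1 * P * f1 N - D * P - Z * f2 P
  | _ => g2 * Z * f2 P - D * Z
  end.

Definition is_jacobian (F : nat -> R -> R -> R -> R) (x y z : R)
  (J : nat -> nat -> R) : Prop :=
  forall i, (i < 3)%nat ->
    derivable_pt_lim (fun t => F i t y z) x (J i 0%nat) /\
    derivable_pt_lim (fun t => F i x t z) y (J i 1%nat) /\
    derivable_pt_lim (fun t => F i x y t) z (J i 2%nat).

(* Z(mu,D,D), given N = N(mu,D,D) and lamZ = lambda_Z(D). *)
Definition Zeq (D g1 g2 lamZ : R) (f1 : R -> R) (N : R) : R :=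
  (g2 / D) * lamZ * (g1 * f1 N - D).

(* A(mu), B(mu), C(mu) as functions of N = N(mu). *)
Definition Acoef (D g1 g2 lamZ : R) (f1 f1' f2' : R -> R) (N : R) : R :=
  Zeq D g1 g2 lamZ f1 N * (D / (g2 * lamZ) - f2' lamZ) - lamZ * f1' N.
Definition Bcoef (D g2 lamZ : R) (f1' : R -> R) (N : R) : R :=
  - (lamZ * f1' N + D) / g2.
Definition Ccoef (D g1 g2 lamZ : R) (f1 f2' : R -> R) (N : R) : R :=
  g2 * Zeq D g1 g2 lamZ f1 N * f2' lamZ.

From Stdlib Require Import Reals Lra Lia Ranalysis5.
Open Scope R_scope.

(* For [mu > mu_c1] the equation of [N(mu)] reads [mu = N + lamZ f1(N) / D], an
   increasing map of slope at least 1, so [N(mu)] is its 1-Lipschitz inverse and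
   [A(mu) = a(N(mu))] with [a(N) = k Z(N) - lamZ f1'(N)], [k = D/(g2 lamZ) - f2'(lamZ)].
   Since [Z(lamP) = 0], [a(lamP) < 0]; far out [f1] is close to its limit and [f1']
   is small, so [a > 0] there and the intermediate value theorem gives [mu_c2].
   Where [A] vanishes the discriminant [A^2 + 4 B C] equals [4 B C < 0], and it stays
   negative nearby by continuity.  The inverse function rule gives
   [A'(mu_c2) = a'(N) / (1 + lamZ f1'(N) / D)], positive when [f1''(N) < 0]; if
   [f1'' < 0] everywhere, [a] is strictly increasing and the zero is unique. *)

Lemma derivable_pt_lim_of_deriv_on_nonneg f f' x :
  deriv_on_nonneg f f' -> 0 < x -> derivable_pt_lim f x (f' x).
Proof.
  intros Hf Hx eps Heps.
  destruct (Hf x (Rlt_le _ _ Hx) eps Heps) as [d [Hd Hy]].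
  assert (Hdx : 0 < Rmin d x) by (apply Rmin_pos; lra).
  exists (mkposreal _ Hdx); intros h Hh0 Hh; simpl in Hh.
  apply Rabs_def2 in Hh; pose proof (Rmin_l d x); pose proof (Rmin_r d x).
  specialize (Hy (x + h)); replace (x + h - x) with h in Hy by ring.
  apply Hy; [lra | lra | apply Rabs_def1; lra].
Qed.

Lemma continuity_pt_of_continuous_on_nonneg g x :
  continuous_on_nonneg g -> 0 < x -> continuity_pt g x.
Proof.
  intros Hg Hx eps Heps.
  destruct (Hg x (Rlt_le _ _ Hx) eps Heps) as [d [Hd Hy]].
  exists (Rmin d x); split; [apply Rmin_pos; lra |].
  intros y [_ Hyx]; simpl in *; unfold Rdist in *.
  apply Rabs_def2 in Hyx; pose proof (Rmin_l d x); pose proof (Rmin_r d x).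
  apply Hy; [lra | apply Rabs_def1; lra].
Qed.

Lemma continuity_pt_cst c x : continuity_pt (fun _ => c) x.
Proof. apply continuity_pt_const; intros ? ?; reflexivity. Qed.

Lemma continuity_pt_of_nonexpanding g x r :
  0 < r -> (forall y, Rabs (y - x) < r -> Rabs (g y - g x) <= Rabs (y - x)) ->
  continuity_pt g x.
Proof.
  intros Hr Hg eps Heps.
  exists (Rmin r eps); split; [apply Rmin_pos; lra |].
  intros y [_ Hyx]; simpl in *; unfold Rdist in *.
  pose proof (Rmin_l r eps); pose proof (Rmin_r r eps).
  specialize (Hg y ltac:(lra)); lra.
Qed.

Lemma continuity_pt_neg_locally h x :
  continuity_pt h x -> h x < 0 -> exists e, 0 < e /\ forall y, Rabs (y - x) < e -> h y < 0.
Proof.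
  intros Hh Hx.
  destruct (Hh (- h x) ltac:(lra)) as [e [He Hy]].
  exists e; split; [exact He |]; intros y Hyx.
  destruct (Req_dec y x) as [-> | Hne]; [exact Hx |].
  specialize (Hy y (conj (conj I (not_eq_sym Hne)) Hyx)); simpl in Hy; unfold Rdist in Hy.
  apply Rabs_def2 in Hy; lra.
Qed.

Lemma strictly_increasing_of_deriv_pos f f' x y :
  (forall t, 0 < t -> derivable_pt_lim f t (f' t)) -> (forall t, 0 < t -> 0 < f' t) ->
  0 < x -> x < y -> f x < f y.
Proof.
  intros Hd Hpos Hx Hxy.
  destruct (MVT_cor2 f f' x y Hxy) as [c [Hc Hcxy]]; [intros c Hc; apply Hd; lra |].
  assert (0 < f' c) by (apply Hpos; lra); nra.
Qed.

(* Mean value theorem on [N, N + 1] with [N] large. *)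
Lemma limit_at_infty_flat_point f f' L x0 eps :
  (forall t, 0 < t -> derivable_pt_lim f t (f' t)) -> limit_at_infty f L ->
  0 < x0 -> 0 < eps -> exists c, x0 < c /\ Rabs (f c - L) < eps /\ Rabs (f' c) < eps.
Proof.
  intros Hd HL Hx0 Heps.
  destruct (HL (eps / 2) ltac:(lra)) as [M HM].
  pose proof (Rmax_l M x0); pose proof (Rmax_r M x0); set (N := Rmax M x0) in *.
  destruct (MVT_cor2 f f' N (N + 1)) as [c [Hc HcN]]; [lra | intros c Hc; apply Hd; lra |].
  pose proof (HM N ltac:(lra)) as HN; pose proof (HM (N + 1) ltac:(lra)) as HN1.
  pose proof (HM c ltac:(lra)) as Hcm.
  exists c; split; [lra |]; split; [lra |].
  replace (f' c) with (f (N + 1) - f N) by lra.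
  apply Rabs_def2 in HN, HN1; apply Rabs_def1; lra.
Qed.

Lemma derivable_pt_lim_inverse f f' g lb ub y :
  lb < y < ub -> continuity_pt g y ->
  (forall z, lb <= z <= ub -> f (g z) = z) ->
  (forall x, g lb <= x <= g ub -> derivable_pt_lim f x (f' x)) ->
  g lb <= g y <= g ub -> f' (g y) <> 0 ->
  derivable_pt_lim g y (/ f' (g y)).
Proof.
  intros Hy Hg Hfg Hf Hgy Hf'.
  set (Prf := fun x Hx => exist _ (f' x) (Hf x Hx) : derivable_pt f x).
  assert (Hder : derive_pt f (g y) (Prf (g y) Hgy) = f' (g y))
    by (apply derive_pt_eq_0, Hf, Hgy).
  replace (/ f' (g y)) with (1 / derive_pt f (g y) (Prf (g y) Hgy))
    by (rewrite Hder; field; exact Hf').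
  apply (derivable_pt_lim_recip_interv f g lb ub y Prf); [exact Hg | lra | exact Hy | | ].
  - intros z Hz; apply Hfg, Hz.
  - rewrite Hder; exact Hf'.
Qed.

Lemma derivable_pt_lim_lin_comb f g x lf lg a b c :
  derivable_pt_lim f x lf -> derivable_pt_lim g x lg ->
  derivable_pt_lim (fun t => a * f t + b * g t + c) x (a * lf + b * lg).
Proof.
  intros Hf Hg; replace (a * lf + b * lg) with (a * lf + b * lg + 0) by ring.
  apply (derivable_pt_lim_plus (fun t => a * f t + b * g t) (fun _ => c));
    [| apply derivable_pt_lim_const].
  apply (derivable_pt_lim_plus (fun t => a * f t) (fun t => b * g t));
    [apply (derivable_pt_lim_scal f), Hf | apply (derivable_pt_lim_scal g), Hg].
Qed.

Lemma affine_derivative_unique (F f : R -> R) (x a b c l L : R) :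
  derivable_pt_lim F x L -> derivable_pt_lim f x l ->
  (forall t, F t = a * t + b * f t + c) -> L = a + b * l.
Proof.
  intros HF Hf HFf; apply (uniqueness_limite F x); [exact HF |].
  apply (derivable_pt_lim_ext (fun t => a * id t + b * f t + c)); [intro t; symmetry; apply HFf |].
  replace (a + b * l) with (a * 1 + b * l) by ring.
  apply derivable_pt_lim_lin_comb; [apply derivable_pt_lim_id | exact Hf].
Qed.

Lemma eigenvalues_of_factored_charpoly (J : nat -> nat -> R) (a p d : R) :
  (forall x, charpoly3 J x =
     Cmul (Csub (RtoC (- d)) x) (Csub (Csub (Cmul x x) (Cmul (RtoC a) x)) (RtoC p))) ->
  a * a + 4 * p < 0 ->
  is_eigenvalue J (RtoC (- d)) /\
  exists w, w <> 0 /\ is_eigenvalue J (a / 2, w) /\ is_eigenvalue J (a / 2, - w).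
Proof.
  intros HJ Hdisc; unfold is_eigenvalue.
  split; [rewrite HJ; unfold Cmul, Csub, Cadd, Copp, RtoC; simpl; f_equal; ring |].
  set (s := sqrt (- (a * a + 4 * p))).
  assert (Hs : s * s = - (a * a + 4 * p)) by (apply sqrt_sqrt; lra).
  assert (Hs0 : 0 < s) by (apply sqrt_lt_R0; lra).
  assert (Hquad : forall w, w * w = s * s / 4 ->
    Csub (Csub (Cmul (a / 2, w) (a / 2, w)) (Cmul (RtoC a) (a / 2, w))) (RtoC p) = RtoC 0).
  { intros w Hw; unfold Cmul, Csub, Cadd, Copp, RtoC; simpl; f_equal; nra. }
  exists (s / 2); split; [lra |].
  split; rewrite HJ, Hquad by nra; unfold Cmul, Csub, Cadd, Copp, RtoC; simpl; f_equal; ring.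
Qed.

Lemma jacobian_field D g1 g2 mu f1 f1' f2 f2' N P Z J :
  (forall x, 0 < x -> derivable_pt_lim f1 x (f1' x)) ->
  (forall x, 0 < x -> derivable_pt_lim f2 x (f2' x)) ->
  0 < N -> 0 < P -> is_jacobian (field D g1 g2 mu f1 f2) N P Z J ->
  J 0%nat 0%nat = - D - P * f1' N /\ J 0%nat 1%nat = - f1 N /\ J 0%nat 2%nat = 0 /\
  J 1%nat 0%nat = g1 * P * f1' N /\ J 1%nat 1%nat = g1 * f1 N - D - Z * f2' P /\
  J 1%nat 2%nat = - f2 P /\
  J 2%nat 0%nat = 0 /\ J 2%nat 1%nat = g2 * Z * f2' P /\ J 2%nat 2%nat = g2 * f2 P - D.
Proof.
  intros Hf1 Hf2 HN HP HJ.
  assert (Hc : forall x, derivable_pt_lim (fun _ => 0) x 0)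
    by (intros; apply derivable_pt_lim_const).
  destruct (HJ 0%nat ltac:(lia)) as [J00 [J01 J02]].
  destruct (HJ 1%nat ltac:(lia)) as [J10 [J11 J12]].
  destruct (HJ 2%nat ltac:(lia)) as [J20 [J21 J22]].
  rewrite (affine_derivative_unique _ _ _ (- D) (- P) (mu * D) _ _ J00 (Hf1 N HN)),
    (affine_derivative_unique _ _ _ (- f1 N) 0 ((mu - N) * D) _ _ J01 (Hc P)),
    (affine_derivative_unique _ _ _ 0 0 ((mu - N) * D - P * f1 N) _ _ J02 (Hc Z)),
    (affine_derivative_unique _ _ _ 0 (g1 * P) (- D * P - Z * f2 P) _ _ J10 (Hf1 N HN)),
    (affine_derivative_unique _ _ _ (g1 * f1 N - D) (- Z) 0 _ _ J11 (Hf2 P HP)),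
    (affine_derivative_unique _ _ _ (- f2 P) 0 (g1 * P * f1 N - D * P) _ _ J12 (Hc Z)),
    (affine_derivative_unique _ _ _ 0 0 (g2 * Z * f2 P - D * Z) _ _ J20 (Hc N)),
    (affine_derivative_unique _ _ _ 0 (g2 * Z) (- D * Z) _ _ J21 (Hf2 P HP)),
    (affine_derivative_unique _ _ _ (g2 * f2 P - D) 0 0 _ _ J22 (Hc Z));
    try (intro; simpl; ring).
  repeat split; ring.
Qed.

(* The total nutrient [N + P / g1 + Z / (g1 g2)] relaxes at rate [D], which gives the
   factor [- D - x]. *)
Lemma charpoly3_jacobian_E2 D g1 g2 mu f1 f1' f2 f2' lamZ N J :
  0 < D -> 0 < g2 -> 0 < lamZ -> f2 lamZ = D / g2 ->
  (forall x, 0 < x -> derivable_pt_lim f1 x (f1' x)) ->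
  (forall x, 0 < x -> derivable_pt_lim f2 x (f2' x)) ->
  0 < N -> is_jacobian (field D g1 g2 mu f1 f2) N lamZ (Zeq D g1 g2 lamZ f1 N) J ->
  forall x, charpoly3 J x =
    Cmul (Csub (RtoC (- D)) x)
      (Csub (Csub (Cmul x x) (Cmul (RtoC (Acoef D g1 g2 lamZ f1 f1' f2' N)) x))
            (RtoC (Bcoef D g2 lamZ f1' N * Ccoef D g1 g2 lamZ f1 f2' N))).
Proof.
  intros HD Hg2 HlamZ Hf2lamZ Hf1 Hf2 HN HJ [xr xi].
  unfold charpoly3, det3C; simpl.
  destruct (jacobian_field _ _ _ _ _ _ _ _ _ _ _ _ Hf1 Hf2 HN HlamZ HJ)
    as [-> [-> [-> [-> [-> [-> [-> [-> ->]]]]]]]].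
  unfold Acoef, Bcoef, Ccoef, Zeq; rewrite Hf2lamZ.
  unfold Cmul, Csub, Cadd, Copp, RtoC; simpl.
  f_equal; field; lra.
Qed.

Lemma response_fun_derivable f f' c x :
  response_fun f f' c -> 0 < x -> derivable_pt_lim f x (f' x).
Proof. intros [_ [Hd _]]; apply derivable_pt_lim_of_deriv_on_nonneg, Hd. Qed.

Lemma response_fun_increasing f f' c x y :
  response_fun f f' c -> 0 < x -> x < y -> f x < f y.
Proof.
  intros Hf; apply (strictly_increasing_of_deriv_pos f f');
    [intros t Ht; apply (response_fun_derivable f f' c t Hf Ht)
    | intros t Ht; apply Hf; lra].
Qed.

Lemma response_fun_level_pos f f' c lam :
  response_fun f f' c -> 0 < c -> 0 <= lam -> f lam = c -> 0 < lam.
Proof.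
  intros [_ [_ [_ [_ [Hf0 _]]]]] Hc [Hlam | <-] Hflam; [exact Hlam | lra].
Qed.

Definition discriminant D g1 g2 lamZ (f1 f1' f2' : R -> R) (N : R) : R :=
  Acoef D g1 g2 lamZ f1 f1' f2' N * Acoef D g1 g2 lamZ f1 f1' f2' N
  + 4 * (Bcoef D g2 lamZ f1' N * Ccoef D g1 g2 lamZ f1 f2' N).

Section Coexistence.

Variables (D g1 g2 lamP lamZ : R) (f1 f1' f2 f2' Nf : R -> R).
Hypotheses (HD : 0 < D) (Hg1 : 0 < g1) (Hg2 : 0 < g2).
Hypotheses (Hf1 : response_fun f1 f1' (D / g1)) (Hf2 : response_fun f2 f2' (D / g2)).
Hypotheses (HlamP : 0 <= lamP) (Hf1lamP : f1 lamP = D / g1).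
Hypotheses (HlamZ : 0 <= lamZ) (Hf2lamZ : f2 lamZ = D / g2).
Hypothesis HN : forall mu, lamP + lamZ / g1 < mu ->
  0 < Nf mu < mu /\ (mu - Nf mu) * D - lamZ * f1 (Nf mu) = 0.

Local Notation muc1 := (lamP + lamZ / g1).
Local Notation Z := (Zeq D g1 g2 lamZ f1).
Local Notation A := (Acoef D g1 g2 lamZ f1 f1' f2').
Local Notation disc := (discriminant D g1 g2 lamZ f1 f1' f2').

(* The equation for [N(mu)] says [mu = mu_of_N (N(mu))]. *)
Definition mu_of_N (N : R) : R := N + lamZ * f1 N / D.

Lemma lamP_pos : 0 < lamP.
Proof. apply (response_fun_level_pos f1 f1' (D / g1)); auto; apply Rdiv_lt_0_compat; lra. Qed.

Lemma lamZ_pos : 0 < lamZ.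
Proof. apply (response_fun_level_pos f2 f2' (D / g2)); auto; apply Rdiv_lt_0_compat; lra. Qed.

Lemma mu_of_N_expanding x y : 0 < x -> x <= y -> y - x <= mu_of_N y - mu_of_N x.
Proof.
  intros Hx [Hxy | <-]; [| lra].
  pose proof (response_fun_increasing f1 f1' _ x y Hf1 Hx Hxy).
  pose proof lamZ_pos.
  assert (0 <= lamZ * (f1 y - f1 x) / D) by (apply Rle_mult_inv_pos; nra).
  unfold mu_of_N; replace (lamZ * f1 y / D) with (lamZ * f1 x / D + lamZ * (f1 y - f1 x) / D)
    by (field; lra); lra.
Qed.

Lemma mu_of_N_lamP : mu_of_N lamP = muc1.
Proof. unfold mu_of_N; rewrite Hf1lamP; field; lra. Qed.

Lemma mu_of_N_Nf mu : muc1 < mu -> mu_of_N (Nf mu) = mu.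
Proof. intros Hmu; destruct (HN mu Hmu) as [_ He]; unfold mu_of_N; field_simplify_eq; lra. Qed.

Lemma Nf_gt_lamP mu : muc1 < mu -> lamP < Nf mu.
Proof.
  intros Hmu; destruct (Rlt_le_dec lamP (Nf mu)) as [Hlt | Hle]; [exact Hlt |].
  pose proof (mu_of_N_expanding (Nf mu) lamP (proj1 (proj1 (HN mu Hmu))) Hle).
  rewrite mu_of_N_lamP, mu_of_N_Nf in * by exact Hmu; lra.
Qed.

Lemma Nf_nonexpanding mu mu' :
  muc1 < mu -> muc1 < mu' -> Rabs (Nf mu - Nf mu') <= Rabs (mu - mu').
Proof.
  intros Hmu Hmu'.
  pose proof (proj1 (proj1 (HN mu Hmu))); pose proof (proj1 (proj1 (HN mu' Hmu'))).
  destruct (Rle_dec (Nf mu') (Nf mu)) as [Hle | Hlt].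
  - pose proof (mu_of_N_expanding (Nf mu') (Nf mu) ltac:(lra) Hle).
    rewrite !mu_of_N_Nf in * by assumption.
    rewrite !Rabs_pos_eq; lra.
  - pose proof (mu_of_N_expanding (Nf mu) (Nf mu') ltac:(lra) ltac:(lra)).
    rewrite !mu_of_N_Nf in * by assumption.
    rewrite !Rabs_left1; lra.
Qed.

Lemma Nf_mu_of_N N : lamP < N -> muc1 < mu_of_N N /\ Nf (mu_of_N N) = N.
Proof.
  intros HN'; pose proof lamP_pos.
  assert (Hmu : muc1 < mu_of_N N).
  { pose proof (mu_of_N_expanding lamP N ltac:(lra) ltac:(lra)); rewrite mu_of_N_lamP in *; lra. }
  split; [exact Hmu |].
  pose proof (proj1 (proj1 (HN _ Hmu))) as HNf.
  destruct (Rtotal_order (Nf (mu_of_N N)) N) as [Hlt | [Heq | Hlt]]; [| exact Heq |].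
  - pose proof (mu_of_N_expanding _ _ HNf (Rlt_le _ _ Hlt)); rewrite mu_of_N_Nf in *; lra.
  - pose proof (mu_of_N_expanding N (Nf (mu_of_N N)) ltac:(lra) (Rlt_le _ _ Hlt)).
    rewrite mu_of_N_Nf in *; lra.
Qed.

Lemma Nf_le mu mu' : muc1 < mu -> mu <= mu' -> Nf mu <= Nf mu'.
Proof.
  intros Hmu Hle; destruct (Rle_dec (Nf mu) (Nf mu')) as [Hok | Hlt]; [exact Hok |].
  assert (Hmu' : muc1 < mu') by lra.
  pose proof (mu_of_N_expanding (Nf mu') (Nf mu) (proj1 (proj1 (HN mu' Hmu'))) ltac:(lra)).
  rewrite !mu_of_N_Nf in * by assumption; lra.
Qed.

Lemma Zeq_pos N : lamP < N -> 0 < Z N.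
Proof.
  intros HN'; pose proof lamP_pos; pose proof lamZ_pos.
  pose proof (response_fun_increasing f1 f1' _ lamP N Hf1 ltac:(lra) HN') as Hf1N.
  rewrite Hf1lamP in Hf1N.
  assert (0 < g1 * f1 N - D).
  { apply (Rmult_lt_compat_l g1) in Hf1N; [| lra]; field_simplify in Hf1N; lra. }
  unfold Zeq; apply Rmult_lt_0_compat; [| lra].
  apply Rmult_lt_0_compat; [apply Rdiv_lt_0_compat |]; lra.
Qed.

Lemma charpoly3_E2 mu J :
  muc1 < mu -> is_jacobian (field D g1 g2 mu f1 f2) (Nf mu) lamZ (Z (Nf mu)) J ->
  forall x, charpoly3 J x =
    Cmul (Csub (RtoC (- D)) x)
      (Csub (Csub (Cmul x x) (Cmul (RtoC (A (Nf mu))) x))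
            (RtoC (Bcoef D g2 lamZ f1' (Nf mu) * Ccoef D g1 g2 lamZ f1 f2' (Nf mu)))).
Proof.
  intros Hmu; apply charpoly3_jacobian_E2; auto using lamZ_pos.
  - intros; apply (response_fun_derivable _ _ _ _ Hf1); assumption.
  - intros; apply (response_fun_derivable _ _ _ _ Hf2); assumption.
  - apply (HN mu Hmu).
Qed.

Lemma Zeq_continuous N : 0 < N -> continuity_pt Z N.
Proof.
  intros HN'; unfold Zeq.
  apply continuity_pt_mult; [apply continuity_pt_cst |].
  apply continuity_pt_minus; [| apply continuity_pt_cst].
  apply continuity_pt_scal, derivable_continuous_pt.
  exists (f1' N); apply (response_fun_derivable _ _ _ _ Hf1 HN').
Qed.

Lemma Acoef_continuous N : 0 < N -> continuity_pt A N.
Proof.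
  intros HN'; unfold Acoef.
  pose proof (continuity_pt_of_continuous_on_nonneg f1' N (proj1 (proj2 (proj2 Hf1))) HN').
  apply continuity_pt_minus; [| apply continuity_pt_scal; assumption].
  apply continuity_pt_mult; [apply Zeq_continuous, HN' | apply continuity_pt_cst].
Qed.

Lemma discriminant_continuous N : 0 < N -> continuity_pt disc N.
Proof.
  intros HN'; unfold discriminant, Bcoef, Ccoef, Rdiv.
  pose proof (continuity_pt_of_continuous_on_nonneg f1' N (proj1 (proj2 (proj2 Hf1))) HN').
  pose proof (Acoef_continuous N HN'); pose proof (Zeq_continuous N HN').
  apply continuity_pt_plus; [apply continuity_pt_mult; assumption |].
  apply continuity_pt_scal, continuity_pt_mult; apply continuity_pt_mult;
    try apply continuity_pt_cst.
  - apply continuity_pt_opp, continuity_pt_plus;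
      [apply continuity_pt_scal; assumption | apply continuity_pt_cst].
  - apply continuity_pt_scal; assumption.
Qed.

(* When [A] vanishes the discriminant reduces to [4 B C], and [B < 0 < C]. *)
Lemma discriminant_neg_at_Acoef_root N : lamP < N -> A N = 0 -> disc N < 0.
Proof.
  intros HN' HA; unfold discriminant; rewrite HA.
  pose proof lamP_pos; pose proof lamZ_pos; pose proof (Zeq_pos N HN').
  assert (0 < f1' N) by (apply Hf1; lra).
  assert (0 < f2' lamZ) by (apply Hf2; lra).
  assert (HB : Bcoef D g2 lamZ f1' N < 0).
  { unfold Bcoef, Rdiv; apply Rmult_neg_pos; [nra | apply Rinv_0_lt_compat, Hg2]. }
  assert (HC : 0 < Ccoef D g1 g2 lamZ f1 f2' N)
    by (unfold Ccoef; apply Rmult_lt_0_compat; [apply Rmult_lt_0_compat |]; lra).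
  nra.
Qed.

Lemma complex_pair_near_Acoef_root Ns :
  lamP < Ns -> A Ns = 0 -> exists delta, 0 < delta /\
    forall mu, Rabs (mu - mu_of_N Ns) < delta -> muc1 < mu /\ disc (Nf mu) < 0.
Proof.
  intros HNs HA; pose proof lamP_pos.
  destruct (Nf_mu_of_N Ns HNs) as [Hmus HNfs].
  destruct (continuity_pt_neg_locally disc Ns (discriminant_continuous Ns ltac:(lra))
              (discriminant_neg_at_Acoef_root Ns HNs HA)) as [e [He Hdisc]].
  exists (Rmin e (mu_of_N Ns - muc1)); split; [apply Rmin_pos; lra |].
  intros mu Hmu; pose proof (Rmin_l e (mu_of_N Ns - muc1));
    pose proof (Rmin_r e (mu_of_N Ns - muc1)).
  assert (Hmu1 : muc1 < mu) by (apply Rabs_def2 in Hmu; lra).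
  split; [exact Hmu1 |]; apply Hdisc.
  pose proof (Nf_nonexpanding mu (mu_of_N Ns) Hmu1 Hmus); rewrite HNfs in *; lra.
Qed.

Lemma Nf_derivable Ns :
  lamP < Ns -> derivable_pt_lim Nf (mu_of_N Ns) (/ (1 + lamZ / D * f1' Ns)).
Proof.
  intros HNs; pose proof lamP_pos; pose proof lamZ_pos.
  destruct (Nf_mu_of_N Ns HNs) as [Hmus HNfs].
  set (r := (mu_of_N Ns - muc1) / 2).
  assert (Hr : 0 < r) by (unfold r; lra).
  assert (Hlb : muc1 < mu_of_N Ns - r) by (unfold r; lra).
  rewrite <- HNfs at 2.
  apply (derivable_pt_lim_inverse mu_of_N (fun N => 1 + lamZ / D * f1' N) Nf
           (mu_of_N Ns - r) (mu_of_N Ns + r)); [lra | | | | |].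
  - apply (continuity_pt_of_nonexpanding Nf _ r Hr); intros y Hy.
    apply Nf_nonexpanding; [apply Rabs_def2 in Hy |]; lra.
  - intros z Hz; apply mu_of_N_Nf; lra.
  - intros x [Hx _]; pose proof (Nf_gt_lamP _ Hlb).
    apply (derivable_pt_lim_ext (fun t => 1 * id t + lamZ / D * f1 t + 0));
      [intro t; unfold mu_of_N, id; field; lra |].
    replace (1 + lamZ / D * f1' x) with (1 * 1 + lamZ / D * f1' x) by ring.
    apply derivable_pt_lim_lin_comb;
      [apply derivable_pt_lim_id | apply (response_fun_derivable _ _ _ _ Hf1); lra].
  - split; apply Nf_le; lra.
  - rewrite HNfs; assert (0 < f1' Ns) by (apply Hf1; lra).
    assert (0 < lamZ / D) by (apply Rdiv_lt_0_compat; lra); nra.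
Qed.

Section Hopf.

Hypothesis Hk : f2' lamZ < D / (g2 * lamZ).

Local Notation slope := (g2 / D * lamZ * g1 * (D / (g2 * lamZ) - f2' lamZ)).

Lemma Acoef_lamP_neg : A lamP < 0.
Proof.
  pose proof lamZ_pos; assert (0 < f1' lamP) by (apply Hf1, HlamP).
  unfold Acoef, Zeq; rewrite Hf1lamP.
  replace (g1 * (D / g1) - D) with 0 by (field; lra); nra.
Qed.

(* Far out, [f1] is close to its limit [L1 > D / g1] and [f1'] is small. *)
Lemma Acoef_pos_far : exists N, lamP < N /\ 0 < A N.
Proof.
  pose proof lamP_pos; pose proof lamZ_pos.
  destruct Hf1 as [_ [_ [_ [_ [_ [_ [L1 [HL1 HL1c]]]]]]]].
  set (d0 := g1 * L1 - D).
  assert (Hd0 : 0 < d0).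
  { unfold d0; apply (Rmult_lt_compat_l g1) in HL1c; [| lra]; field_simplify in HL1c; lra. }
  set (q := g2 * (D / (g2 * lamZ) - f2' lamZ) / D).
  assert (Hq : 0 < q) by (unfold q; apply Rdiv_lt_0_compat; [apply Rmult_lt_0_compat |]; lra).
  pose proof (Rmin_l (d0 / (2 * g1)) (q * d0 / 4)) as Heps1.
  pose proof (Rmin_r (d0 / (2 * g1)) (q * d0 / 4)) as Heps2.
  assert (Heps : 0 < Rmin (d0 / (2 * g1)) (q * d0 / 4))
    by (apply Rmin_pos; apply Rdiv_lt_0_compat; nra).
  set (eps := Rmin (d0 / (2 * g1)) (q * d0 / 4)) in *.
  destruct (limit_at_infty_flat_point f1 f1' L1 lamP eps) as [c [Hc [Hf1c Hf1'c]]]; auto.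
  { intros; apply (response_fun_derivable _ _ _ _ Hf1); assumption. }
  exists c; split; [exact Hc |].
  apply Rabs_def2 in Hf1c, Hf1'c.
  assert (Hgap : d0 / 2 < g1 * f1 c - D).
  { assert (g1 * eps <= d0 / 2).
    { apply (Rmult_le_compat_l g1) in Heps1; [| lra].
      replace (g1 * (d0 / (2 * g1))) with (d0 / 2) in Heps1 by (field; lra); lra. }
    unfold d0 in *; nra. }
  assert (HA : A c = lamZ * (q * (g1 * f1 c - D) - f1' c))
    by (unfold Acoef, Zeq, q; field; lra).
  rewrite HA; apply Rmult_lt_0_compat; [lra | nra].
Qed.

Lemma Acoef_root : exists Ns, lamP < Ns /\ A Ns = 0.
Proof.
  pose proof lamP_pos; destruct Acoef_pos_far as [N [HN' HAN]].
  destruct (IVT_interv A lamP N) as [Ns [[HNs1 HNs2] HANs]];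
    [intros a Ha; apply Acoef_continuous; lra | exact HN' | exact Acoef_lamP_neg | exact HAN |].
  exists Ns; split; [| exact HANs].
  destruct HNs1 as [Hlt | <-]; [exact Hlt | pose proof Acoef_lamP_neg; lra].
Qed.

Lemma Acoef_slope_pos : 0 < slope.
Proof.
  pose proof lamZ_pos; assert (0 < g2 / D) by (apply Rdiv_lt_0_compat; lra).
  apply Rmult_lt_0_compat; [apply Rmult_lt_0_compat; [apply Rmult_lt_0_compat |] |]; lra.
Qed.

Lemma Acoef_derivable f1'' N : deriv_on_nonneg f1' f1'' -> 0 < N ->
  derivable_pt_lim A N
    (slope * f1' N - lamZ * f1'' N).
Proof.
  intros Hf1'' HN'.
  apply (derivable_pt_lim_ext (fun t => slope * f1 t + (- lamZ) * f1' t
           + (- (g2 / D * lamZ * D * (D / (g2 * lamZ) - f2' lamZ)))));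
    [intro t; unfold Acoef, Zeq; ring |].
  replace (slope * f1' N - lamZ * f1'' N) with (slope * f1' N + - lamZ * f1'' N) by ring.
  apply derivable_pt_lim_lin_comb; [apply (response_fun_derivable _ _ _ _ Hf1 HN') |].
  apply derivable_pt_lim_of_deriv_on_nonneg; assumption.
Qed.

Lemma A_crosses_with_positive_speed f1'' Ns :
  deriv_on_nonneg f1' f1'' -> lamP < Ns -> f1'' Ns < 0 ->
  exists a, derivable_pt_lim (fun mu => A (Nf mu)) (mu_of_N Ns) a /\ 0 < a.
Proof.
  intros Hf1'' HNs Hneg; pose proof lamP_pos; pose proof lamZ_pos.
  destruct (Nf_mu_of_N Ns HNs) as [_ HNfs].
  assert (0 < f1' Ns) by (apply Hf1; lra).
  assert (0 < lamZ / D) by (apply Rdiv_lt_0_compat; lra).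
  pose proof Acoef_slope_pos.
  eexists; split.
  - apply (derivable_pt_lim_comp Nf A); [apply Nf_derivable, HNs |].
    rewrite HNfs; apply (Acoef_derivable f1''); [exact Hf1'' | lra].
  - apply Rmult_lt_0_compat; [nra | apply Rinv_0_lt_compat; nra].
Qed.

Lemma Acoef_root_unique f1'' Ns mu :
  deriv_on_nonneg f1' f1'' -> (forall x, 0 <= x -> f1'' x < 0) ->
  lamP < Ns -> A Ns = 0 -> muc1 < mu -> A (Nf mu) = 0 -> mu = mu_of_N Ns.
Proof.
  intros Hf1'' Hneg HNs HANs Hmu HAmu; pose proof lamP_pos; pose proof lamZ_pos.
  assert (HAinc : forall x y, 0 < x -> x < y -> A x < A y).
  { intros x y Hx Hxy.
    apply (strictly_increasing_of_deriv_pos A (fun N => slope * f1' N - lamZ * f1'' N));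
      [intros; apply (Acoef_derivable f1''); assumption | | exact Hx | exact Hxy].
    intros t Ht; assert (0 < f1' t) by (apply Hf1; lra); assert (f1'' t < 0) by (apply Hneg; lra).
    pose proof Acoef_slope_pos; nra. }
  pose proof (Nf_gt_lamP mu Hmu).
  destruct (Rtotal_order (Nf mu) Ns) as [Hlt | [Heq | Hlt]].
  - pose proof (HAinc (Nf mu) Ns ltac:(lra) Hlt); lra.
  - rewrite <- Heq; symmetry; apply mu_of_N_Nf, Hmu.
  - pose proof (HAinc Ns (Nf mu) ltac:(lra) Hlt); lra.
Qed.

End Hopf.

End Coexistence.

Theorem theorem3p5
  (D g1 g2 : R) (f1 f1' f2 f2' : R -> R)
  (HD : 0 < D) (Hg1 : 0 < g1) (Hg2 : 0 < g2)
  (Hf1 : response_fun f1 f1' (D / g1))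
  (Hf2 : response_fun f2 f2' (D / g2))
  (lamP lamZ : R)
  (HlamP : 0 <= lamP /\ f1 lamP = D / g1)
  (HlamZ : 0 <= lamZ /\ f2 lamZ = D / g2)
  (Nf : R -> R)
  (HN : forall mu, lamP + lamZ / g1 < mu ->
          0 < Nf mu < mu /\ (mu - Nf mu) * D - lamZ * f1 (Nf mu) = 0) :
  let muc1 := lamP + lamZ / g1 in
  let A := fun mu => Acoef D g1 g2 lamZ f1 f1' f2' (Nf mu) in
  let B := fun mu => Bcoef D g2 lamZ f1' (Nf mu) in
  let C := fun mu => Ccoef D g1 g2 lamZ f1 f2' (Nf mu) in
  let Jac := fun mu J =>
    is_jacobian (field D g1 g2 mu f1 f2) (Nf mu) lamZ
                (Zeq D g1 g2 lamZ f1 (Nf mu)) J in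
  (* characteristic polynomial of J(E2(mu)) *)
  (forall mu J, muc1 < mu -> Jac mu J ->
     forall x : Cx,
       charpoly3 J x =
       Cmul (Csub (RtoC (- D)) x)
            (Csub (Csub (Cmul x x) (Cmul (RtoC (A mu)) x))
                  (RtoC (B mu * C mu)))) /\
  (D / (g2 * lamZ) > f2' lamZ ->
   exists muc2, muc1 < muc2 /\ A muc2 = 0 /\
     (* (1) at mu = muc2 *)
     (forall J, Jac muc2 J ->
        is_eigenvalue J (RtoC (- D)) /\
        exists w, w <> 0 /\ is_eigenvalue J (0, w) /\ is_eigenvalue J (0, - w)) /\
     (* (1) in a neighbourhood of muc2 *)
     (exists delta, 0 < delta /\
        forall mu, Rabs (mu - muc2) < delta ->
          muc1 < mu /\
          forall J, Jac mu J ->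
            is_eigenvalue J (RtoC (- D)) /\
            exists w, w <> 0 /\ is_eigenvalue J (A mu / 2, w) /\
                      is_eigenvalue J (A mu / 2, - w)) /\
     (* (2) *)
     (forall f1'' : R -> R, deriv_on_nonneg f1' f1'' ->
        f1'' (Nf muc2) < 0 ->
        exists a, derivable_pt_lim A muc2 a /\ 0 < a) /\
     (* (3) *)
     (forall f1'' : R -> R, deriv_on_nonneg f1' f1'' ->
        (forall x, 0 <= x -> f1'' x < 0) ->
        forall mu, muc1 < mu -> A mu = 0 -> mu = muc2)).
Proof.
  intros muc1 A B C Jac.
  destruct HlamP as [HlamP0 Hf1lamP], HlamZ as [HlamZ0 Hf2lamZ].
  assert (Hchar := charpoly3_E2 D g1 g2 lamP lamZ f1 f1' f2 f2' Nf).
  split; [now apply Hchar | intros Hk].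
  destruct (Acoef_root D g1 g2 lamP lamZ f1 f1' f2 f2') as [Ns [HNs HANs]]; auto.
  destruct (Nf_mu_of_N D g1 g2 lamP lamZ f1 f1' f2 f2' Nf) with Ns as [Hmuc2 HNfs]; auto.
  exists (mu_of_N D lamZ f1 Ns); split; [exact Hmuc2 |].
  split; [unfold A; rewrite HNfs; exact HANs |].
  split; [| split; [| split]].
  - intros J HJ.
    set (muc2 := mu_of_N D lamZ f1 Ns) in *.
    destruct (eigenvalues_of_factored_charpoly J (A muc2) (B muc2 * C muc2) D)
      as [Heig [w [Hw Hpair]]]; [now apply Hchar |
      | unfold A in Hpair; rewrite HNfs, HANs, Rdiv_0_l in Hpair; eauto].
    unfold A, B, C; rewrite HNfs.
    now apply (discriminant_neg_at_Acoef_root D g1 g2 lamP lamZ f1 f1' f2 f2').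
  - destruct (complex_pair_near_Acoef_root D g1 g2 lamP lamZ f1 f1' f2 f2' Nf) with Ns
      as [delta [Hdelta Hnear]]; auto.
    exists delta; split; [exact Hdelta |]; intros mu Hmu.
    destruct (Hnear mu Hmu) as [Hmu1 Hdisc]; split; [exact Hmu1 |].
    intros J HJ; apply (eigenvalues_of_factored_charpoly J _ (B mu * C mu));
      [now apply Hchar | exact Hdisc].
  - intros f1'' Hf1'' Hneg; rewrite HNfs in Hneg.
    now apply (A_crosses_with_positive_speed D g1 g2 lamP lamZ f1 f1' f2 f2' Nf) with f1''.
  - intros f1'' Hf1'' Hneg mu Hmu HAmu.
    now apply (Acoef_root_unique D g1 g2 lamP lamZ f1 f1' f2 f2' Nf) with f1''.
Qed.
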